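(* Let $G$ be a connected graph of order $n\ge 2$. (a) If $O_{\rm SR}(G)=\mathcal{M}$, then $\textnormal{sdim}(G)\le\lfloor n/2\rfloor$. (b) If $\textnormal{sdim}(G)\ge\lceil n/2\rceil+1$, then $O_{\rm SR}(G)=\mathcal{B}$.
   Context: All graphs are finite, simple and undirected. A set $S\subseteq V(G)$ is a strong resolving set of a connected graph $G$ if for all distinct $x,y\in V(G)$ there exists $z\in S$ such that $x$ lies on a $y$–$z$ geodesic or $y$ lies on an $x$–$z$ geodesic; $\textnormal{sdim}(G)$ is the minimum cardinality of a strong resolving set. The Maker–Breaker strong resolving game on $G$: Maker and Breaker alternately select a not-yet-chosen vertex of $G$; Maker wins if the vertices he selects contain a strong resolving set of $G$, Breaker wins otherwise. In the M-game Maker moves first, in the B-game Breaker moves first. $O_{\rm SR}(G)=\mathcal{M}$ if Maker has a winning strategy in both games, $\mathcal{B}$ if Breaker has a winning strategy in both, and $\mathcal{N}$ if the first player has a winning strategy in each. *)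

From mathcomp Require Import all_boot.
Set Implicit Arguments. Unset Strict Implicit. Unset Printing Implicit Defensive.

Section Graph.
Variables (T : finType) (e : rel T).

Definition simple_graph := symmetric e /\ irreflexive e.
Definition connected_graph := forall x y : T, connect e x y.

Fixpoint within (k : nat) (x y : T) : bool :=
  match k with
  | 0 => x == y
  | k'.+1 => (x == y) || [exists z, e x z && within k' z y]
  end.

(* shortest-path distance (correct for connected graphs, where d < #|T|) *)
Definition dist (x y : T) : nat := find (fun k => within k x y) (iota 0 #|T|).

Definition on_geodesic (y x z : T) : bool := dist y x + dist x z == dist y z.

Definition strong_resolving (S : {set T}) : bool :=
  [forall x, forall y, (x != y) ==>
     [exists z in S, on_geodesic y x z || on_geodesic x y z]].

(* strong metric dimension: min cardinality of a strong resolving set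
   (V(G) itself is one when G is connected) *)
Definition sdim : nat :=
  \big[minn/#|T|]_(S : {set T} | strong_resolving S) #|S|.

(* Maker-Breaker strong resolving game.  mwin n M B mturn: with M (Maker's)
   and B (Breaker's) chosen, n = number of free vertices, and mturn telling
   whether Maker is to move, Maker has a winning strategy.  The game ends when
   all vertices are chosen; Maker wins iff his vertices contain a strong
   resolving set (equivalently, form one, since the property is upward closed). *)
Fixpoint mwin (n : nat) (M B : {set T}) (mturn : bool) : bool :=
  match n with
  | 0 => strong_resolving M
  | n'.+1 =>
    if mturn then [exists v, (v \notin M :|: B) && mwin n' (v |: M) B false]
    else [forall v, (v \notin M :|: B) ==> mwin n' M (v |: B) true]
  end.

Definition maker_wins_Mgame : bool := mwin #|T| set0 set0 true.
Definition maker_wins_Bgame : bool := mwin #|T| set0 set0 false.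

(* O_SR(G) = M : Maker wins both games; O_SR(G) = B : Breaker wins both
   (finite games without draws: Breaker wins iff Maker has no winning strategy) *)
Definition outcome_M : Prop := maker_wins_Mgame /\ maker_wins_Bgame.
Definition outcome_B : Prop := ~~ maker_wins_Mgame /\ ~~ maker_wins_Bgame.

End Graph.

From mathcomp Require Import all_boot all_order.

Set Implicit Arguments.
Unset Strict Implicit.
Unset Printing Implicit Defensive.

(* When Maker wins, the vertices he holds at the end of the play contain a
   strong resolving set, and he claims only ceil(k/2) of the k free vertices
   when he moves first and floor(k/2) when Breaker moves first.  Hence sdim is
   at most floor(n/2) if Maker wins the B-game and at most ceil(n/2) if he
   wins either game. *)

Section MakerBreaker.
Variables (T : finType) (e : rel T).

(* [minn] is convertible to [Order.min] on [nat]. *)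
Lemma sdim_le_card (S : {set T}) : strong_resolving e S -> sdim e <= #|S|.
Proof. exact: (@Order.TotalTheory.bigmin_le_cond _ nat). Qed.

Definition maker_moves (k : nat) (mturn : bool) : nat :=
  if mturn then uphalf k else k./2.

Lemma maker_moves_le_uphalf k mturn : maker_moves k mturn <= uphalf k.
Proof. by case: mturn; rewrite //= uphalf_half leq_addl. Qed.

Lemma maker_movesS k mturn :
  maker_moves k.+1 mturn = mturn + maker_moves k (~~ mturn).
Proof. by case: mturn; rewrite /= ?uphalf_half. Qed.

Lemma mwin_small_strong_resolving k (M B : {set T}) mturn :
  #|M :|: B| + k = #|T| -> mwin e k M B mturn ->
  exists2 S, strong_resolving e S & #|S| <= #|M| + maker_moves k mturn.
Proof.
elim: k M B mturn => [|k IHk] M B mturn card_free /=.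
  by move=> M_sr; exists M; rewrite ?leq_addr.
case: mturn => [/existsP[v /andP[v_free win_v]] | /forallP win_all].
- have card_free' : #|v |: M :|: B| + k = #|T|.
    by rewrite -setUA cardsU1 v_free addSnnS.
  have [S S_sr le_S] := IHk _ _ _ card_free' win_v.
  exists S => //; apply: (leq_trans le_S).
  by rewrite maker_movesS addnA leq_add2r cardsU1 addnC leq_add2l leq_b1.
- have [v v_free | no_free] := pickP (fun v => v \notin M :|: B).
    have card_free' : #|M :|: (v |: B)| + k = #|T|.
      by rewrite setUCA cardsU1 v_free addSnnS.
    have [S S_sr le_S] := IHk _ _ _ card_free' (implyP (win_all v) v_free).
    by exists S; rewrite // maker_movesS add0n.
  suff all_taken : M :|: B = setT.
    by move: card_free; rewrite all_taken cardsT -[X in _ = X]addn0 => /addnI.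
  by apply/setP=> x; rewrite in_setT; move/negbFE: (no_free x).
Qed.

Lemma sdim_le_maker_moves mturn :
  mwin e #|T| set0 set0 mturn -> sdim e <= maker_moves #|T| mturn.
Proof.
move=> win; have card_free : #|set0 :|: set0 : {set T}| + #|T| = #|T|.
  by rewrite setU0 cards0.
have [S S_sr le_S] := mwin_small_strong_resolving card_free win.
by rewrite (leq_trans (sdim_le_card S_sr)) // -[maker_moves _ _]add0n -(cards0 T).
Qed.

End MakerBreaker.

Theorem mainTheorem7 (T : finType) (e : rel T) :
  simple_graph e -> connected_graph e -> 2 <= #|T| ->
  (outcome_M e -> sdim e <= #|T| ./2) /\
  ((uphalf #|T|).+1 <= sdim e -> outcome_B e).
Proof.
move=> _ _ _; split.
  by case=> _ /sdim_le_maker_moves.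
move=> large_sdim; split; apply/negP=> /sdim_le_maker_moves small_sdim;
  by move: (leq_trans large_sdim small_sdim); rewrite ltnNge maker_moves_le_uphalf.
Qed.
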